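(* Fix an integer $k\geq1$ and $V=\{0,\ldots,k\}$. If a Boolean function $\varphi$ on $V$ satisfies $\mathrm{eul}(\varphi)=0$, then $\varphi$ is fragmentable.
   Context: A valuation is a subset $\nu\subseteq V$; $\nu^{(l)}$ is $\nu$ with membership of $l$ flipped. A Boolean function on $V$ is a map $\varphi:2^V\to\{\text{false},\text{true}\}$; $\mathrm{eul}(\varphi)=\sum_{\nu:\varphi(\nu)=\text{true}}(-1)^{|\nu|}$. $\varphi$ is degenerate if there is $l\in V$ with $\varphi(\nu)=\varphi(\nu^{(l)})$ for all $\nu$. Two functions are disjoint if no valuation satisfies both. A $\neg$-$\vee$-template is a Boolean circuit all of whose internal gates are $\neg$- or $\vee$-gates (a single leaf is allowed); its leaves $l_0,\ldots,l_n$ are holes. $T[\varphi_0,\ldots,\varphi_n]$ is the function obtained by substituting $\varphi_i$ for $l_i$; it is deterministic if, for every $\vee$-gate of the template, any two distinct inputs compute disjoint functions. $\varphi$ is fragmentable if there exist a $\neg$-$\vee$-template $T$ and degenerate functions $\varphi_0,\ldots,\varphi_n$ (one per hole) such that $T[\varphi_0,\ldots,\varphi_n]$ is deterministic and equivalent to $\varphi$. *)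

From mathcomp Require Import all_boot all_order all_algebra.
Set Implicit Arguments. Unset Strict Implicit. Unset Printing Implicit Defensive.
Import GRing.Theory Num.Theory.

(* Variables V = {0,...,k} are 'I_k.+1; a valuation is a subset of V. *)
Definition valuation (k : nat) := {set 'I_k.+1}.

Definition bfun (k : nat) := valuation k -> bool.

Definition flip (k : nat) (nu : valuation k) (l : 'I_k.+1) : valuation k :=
  if l \in nu then nu :\ l else l |: nu.

Definition eul (k : nat) (phi : bfun k) : int :=
  (\sum_(nu : {set 'I_k.+1} | phi nu) (-1) ^+ #|nu|)%R.

Definition degenerate (k : nat) (phi : bfun k) : Prop :=
  exists l : 'I_k.+1, forall nu : valuation k, phi nu = phi (flip nu l).

Definition disjoint_fun (k : nat) (f g : bfun k) : Prop :=
  forall nu : valuation k, ~~ (f nu && g nu).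

(* A neg-or template with its holes already substituted: T[phi_0,...,phi_n].
   Templates are represented as trees (formulas); every leaf is a distinct
   hole carrying the function substituted for it. *)
Inductive subst_template (k : nat) : Type :=
| Hole of bfun k
| NegG of subst_template k
| OrG of seq (subst_template k).

Arguments Hole {k}. Arguments NegG {k}. Arguments OrG {k}.

Definition dflt_tmpl (k : nat) : subst_template k := Hole (fun _ => false).

Fixpoint eval (k : nat) (t : subst_template k) (nu : valuation k) : bool :=
  match t with
  | Hole f => f nu
  | NegG t' => ~~ eval t' nu
  | OrG ts => has (fun s => eval s nu) ts
  end.

Inductive deterministic (k : nat) : subst_template k -> Prop :=
| det_hole f : deterministic (Hole f)
| det_neg t : deterministic t -> deterministic (NegG t)
| det_or ts :
    (forall i, i < size ts -> deterministic (nth (dflt_tmpl k) ts i)) ->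
    (forall i j, i < size ts -> j < size ts -> i != j ->
       disjoint_fun (eval (nth (dflt_tmpl k) ts i))
                    (eval (nth (dflt_tmpl k) ts j))) ->
    deterministic (OrG ts).

(* Every hole is filled by a degenerate function; or-gates have at least one
   input (a genuine circuit gate). *)
Inductive degenerate_holes (k : nat) : subst_template k -> Prop :=
| dh_hole f : degenerate f -> degenerate_holes (Hole f)
| dh_neg t : degenerate_holes t -> degenerate_holes (NegG t)
| dh_or ts : 0 < size ts ->
    (forall i, i < size ts -> degenerate_holes (nth (dflt_tmpl k) ts i)) ->
    degenerate_holes (OrG ts).

Definition fragmentable (k : nat) (phi : bfun k) : Prop :=
  exists t : subst_template k,
    [/\ degenerate_holes t, deterministic t & forall nu, eval t nu = phi nu].

(** The empty set and every edge [{nu, nu^(l)}] of the cube are fragmentable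
sets of valuations (single degenerate holes), and fragmentable sets are closed
under complement and disjoint union, hence under differences [A :\: B] with
[B \subset A].  If [e] and [o] have cardinalities of different parity, walk
from [e] towards [o] by two flips [e, x1, x2]: then
[{e, o} = ({e, x1} :|: {x2, o}) :\: {x1, x2}], and [{x2, o}] is fragmentable
by induction on the Hamming distance to [o].  Finally [eul phi = 0] says that
the satisfying set of [phi] has as many even as odd valuations, so it is a
disjoint union of such pairs. *)
From mathcomp Require Import all_boot all_order all_algebra.
Set Implicit Arguments. Unset Strict Implicit. Unset Printing Implicit Defensive.
Import GRing.Theory Num.Theory.

Section Flip.
Variable k : nat.
Implicit Types (a b nu : valuation k) (l : 'I_k.+1).

Lemma in_flip nu l x : (x \in flip nu l) = (x == l) (+) (x \in nu).
Proof.
by rewrite /flip; case: ifP => nul; rewrite !inE; case: eqVneq => [->|] //=; rewrite nul.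
Qed.

Lemma flipK l : involutive (@flip k ^~ l).
Proof. by move=> nu; apply/setP => x; rewrite !in_flip addbA addbb. Qed.

Lemma odd_card_flip nu l : odd #|flip nu l| = ~~ odd #|nu|.
Proof.
rewrite /flip; case: ifP => nul; last by rewrite cardsU1 nul.
by rewrite [#|nu|](cardsD1 l) nul negbK.
Qed.

Lemma card_flip_lt nu l : l \in nu -> #|flip nu l| < #|nu|.
Proof. by move=> nul; rewrite /flip nul proper_card ?properD1. Qed.

Definition symdiff a b : valuation k := [set x | (x \in a) (+) (x \in b)].

Lemma symdiff_flip a b l : symdiff (flip a l) b = flip (symdiff a b) l.
Proof. by apply/setP => x; rewrite !(inE, in_flip) addbA. Qed.

Lemma symdiff_eq0 a b : (symdiff a b == set0) = (a == b).
Proof.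
apply/eqP/eqP => [/setP sd0 | ->]; apply/setP => x; last by rewrite !inE addbb.
by have := sd0 x; rewrite !inE; case: (x \in a); case: (x \in b).
Qed.

End Flip.

Lemma fragmentable_ext k (f g : bfun k) : f =1 g -> fragmentable f -> fragmentable g.
Proof. by move=> fg [t [holes det evalt]]; exists t; split=> // nu; rewrite evalt. Qed.

Definition fragmentable_set k (S : {set valuation k}) :=
  fragmentable (fun nu => nu \in S).

Section FragmentableSets.
Variable k : nat.
Implicit Types (A B S : {set valuation k}) (nu : valuation k).

Lemma fragmentable_set0 : fragmentable_set (set0 : {set valuation k}).
Proof.
exists (Hole (fun _ => false)); split=> [||nu]; last by rewrite inE.
  by constructor; exists ord0.
by constructor.
Qed.

Lemma fragmentable_set_edge nu l : fragmentable_set [set nu; flip nu l].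
Proof.
exists (Hole (fun mu => mu \in [set nu; flip nu l])); split=> //; last by constructor.
constructor; exists l => mu; rewrite !inE (inj_eq (can_inj (flipK l))) orbC.
by rewrite -{1}[mu](flipK l) (inj_eq (can_inj (flipK l))).
Qed.

Lemma fragmentable_setC A : fragmentable_set A -> fragmentable_set (~: A).
Proof.
move=> [t [holes det evalt]]; exists (NegG t).
by split=> [||nu]; [constructor | constructor | rewrite /= evalt inE].
Qed.

Lemma fragmentable_setU A B : [disjoint A & B] ->
  fragmentable_set A -> fragmentable_set B -> fragmentable_set (A :|: B).
Proof.
move=> AB [ta [holesa deta evala]] [tb [holesb detb evalb]].
exists (OrG [:: ta; tb]); split=> [||nu]; last by rewrite /= evala evalb inE orbF.
  by apply: dh_or => // -[|[|i]].
apply: det_or => [[|[|i]] // | [|[|i]] [|[|j]] // _ _ _ nu /=].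
all: rewrite evala evalb; case nuA: (nu \in A); rewrite ?andbF //.
all: by rewrite (disjointFr AB nuA).
Qed.

Lemma fragmentable_setD A B : B \subset A ->
  fragmentable_set A -> fragmentable_set B -> fragmentable_set (A :\: B).
Proof.
move=> BA fA fB; rewrite setDE -[A]setCK -setCU.
by apply/fragmentable_setC/fragmentable_setU; rewrite ?disjoints_subset ?setCS //;
  apply: fragmentable_setC.
Qed.

End FragmentableSets.

Lemma fragmentable_set_path k (a b c d : valuation k) : uniq [:: a; b; c; d] ->
  fragmentable_set [set a; b] -> fragmentable_set [set b; c] ->
  fragmentable_set [set c; d] -> fragmentable_set [set a; d].
Proof.
rewrite /= !inE !negb_or => /and4P[/and3P[ab ac ad] /andP[bc bd] cd _] fab fbc fcd.
have -> : [set a; d] = ([set a; b] :|: [set c; d]) :\: [set b; c].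
  apply/setP => x; rewrite !inE.
  have [->|xa] := eqVneq x a; first by rewrite (negbTE ab) (negbTE ac).
  have [->|xd] := eqVneq x d; first by rewrite eq_sym (negbTE bd) eq_sym (negbTE cd) !orbT.
  by case: (x == b); case: (x == c).
apply: fragmentable_setD => //.
  by apply/subsetP => x; rewrite !inE => /orP[]->; rewrite ?orbT.
apply: fragmentable_setU => //; rewrite -setI_eq0; apply/eqP/setP => x; rewrite !inE.
have [->|xa] := eqVneq x a; first by rewrite (negbTE ac) (negbTE ad).
by have [->|xb] := eqVneq x b; rewrite ?(negbTE bc) ?(negbTE bd) ?andbF.
Qed.

Lemma fragmentable_set_pair k (e o : valuation k) :
  odd #|e| != odd #|o| -> fragmentable_set [set e; o].
Proof.
have [n] := ubnP #|symdiff e o|; elim: n e => // n IH e /ltnSE le_n par_eo.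
have neq_of_lt y z : #|symdiff z o| < #|symdiff y o| -> y != z.
  by move=> lt_zy; apply: contraTneq lt_zy => ->; rewrite ltnn.
have [l eol] : exists l, l \in symdiff e o.
  by apply/set0Pn; rewrite symdiff_eq0; apply: contraNneq par_eo => ->.
set x1 := flip e l.
have [<-|x1o] := eqVneq x1 o; first exact: fragmentable_set_edge.
have [l' x1ol'] : exists l', l' \in symdiff x1 o by apply/set0Pn; rewrite symdiff_eq0.
set x2 := flip x1 l'.
have lt1 : #|symdiff x1 o| < #|symdiff e o| by rewrite symdiff_flip card_flip_lt.
have lt2 : #|symdiff x2 o| < #|symdiff x1 o| by rewrite symdiff_flip card_flip_lt.
have par2 : odd #|x2| != odd #|o| by rewrite !odd_card_flip negbK.
apply: (@fragmentable_set_path _ _ x1 x2); try exact: fragmentable_set_edge.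
  have eo : e != o by apply: contraNneq par_eo => ->.
  have x2o : x2 != o by apply: contraNneq par2 => ->.
  by rewrite /= !inE !negb_or eo x1o x2o !neq_of_lt // (ltn_trans lt2 lt1).
by apply: IH par2; rewrite (leq_trans lt2) // (leq_trans (ltnW lt1)).
Qed.

Lemma exists_card_parity k (S : {set valuation k}) b : S != set0 ->
  (\sum_(nu in S) (-1) ^+ #|nu| = 0 :> int)%R -> exists2 nu, nu \in S & odd #|nu| = b.
Proof.
move=> S0 sum0.
have [/exists_inP[nu nuS /eqP]|] := boolP [exists nu in S, odd #|nu| == b]; first by exists nu.
rewrite negb_exists_in => /forall_inP other.
have : (\sum_(nu in S) (-1) ^+ #|nu| = (-1) ^+ (~~ b) *+ #|S| :> int)%R.
  rewrite -sumr_const; apply: eq_bigr => nu /other.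
  by rewrite -signr_odd; case: (odd _); case: (b).
by rewrite sum0 => /eqP; rewrite eq_sym mulrn_eq0 signr_eq0 orbF cards_eq0 (negbTE S0).
Qed.

Lemma fragmentable_set_signed_sum0 k (S : {set valuation k}) :
  (\sum_(nu in S) (-1) ^+ #|nu| = 0 :> int)%R -> fragmentable_set S.
Proof.
have [n] := ubnP #|S|; elim: n S => // n IH S /ltnSE le_n sum0.
have [->|S0] := eqVneq S set0; first exact: fragmentable_set0.
have [e eS par_e] := exists_card_parity false S0 sum0.
have [o oS par_o] := exists_card_parity true S0 sum0.
have eo : e != o by apply: contraFneq par_e => ->.
have eo_S : [set e; o] \subset S by apply/subsetP => nu; rewrite !inE => /orP[]/eqP->.
have S_split : S = [set e; o] :|: S :\: [set e; o].
  by rewrite -{1}(setID S [set e; o]) (setIidPr eo_S).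
have eo_disjoint : [disjoint [set e; o] & S :\: [set e; o]].
  by rewrite disjoints_subset setDE setCI setCK subsetUr.
rewrite S_split; apply: fragmentable_setU => //.
  by apply: fragmentable_set_pair; rewrite par_e par_o.
apply: IH.
  by rewrite cardsDS // cards2 eo (leq_trans _ le_n) // ltn_subrL card_gt0 S0.
move: sum0; rewrite (big_setID [set e; o]) (setIidPr eo_S) big_setU1 ?inE //= big_set1.
by rewrite -(signr_odd _ #|e|) -(signr_odd _ #|o|) par_e par_o addrN add0r.
Qed.

Theorem proposition5p1 (k : nat) (hk : 1 <= k) (phi : bfun k) :
  eul phi = 0%R -> fragmentable phi.
Proof.
(* [hk] is unused: [fragmentable_set0] only needs [V = 'I_k.+1] to be nonempty. *)
move=> eul0; apply: (@fragmentable_ext _ (fun nu => nu \in [set nu | phi nu])).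
  by move=> nu; rewrite inE.
apply: fragmentable_set_signed_sum0; apply: etrans eul0.
by apply: eq_bigl => nu; rewrite inE.
Qed.
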